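(* Let $m,k\in\mathbb{N}$ and let $\beta\in\mathbb{C}$ with $\beta\notin\mathbb{Z}_0^-$ and $\frac{1+\beta}{2}-m\notin\mathbb{Z}_0^-$. Then \[ {}_3F_2\left[\begin{array}{r} -2m,\ \beta,\ -m-k-\tfrac{1}{2};\\ -2m-2k-1,\ \tfrac{1+\beta}{2}-m;\end{array}1\right]_{2m}=\frac{\left(\frac{1}{2}\right)_m\left(\frac{2+\beta+2k}{2}\right)_m}{\left(\frac{1-\beta}{2}\right)_m\left(1+k\right)_m}. \]
   Context: $\mathbb{N}=\{1,2,3,\dots\}$, $\mathbb{Z}_0^-=\{0,-1,-2,\dots\}$. For $a\in\mathbb{C}$ and $n\in\mathbb{N}_0$, $(a)_0=1$ and $(a)_n=a(a+1)\cdots(a+n-1)$ (Pochhammer symbol). For $N\in\mathbb{N}_0$, the truncated series is ${}_3F_2\left[\begin{array}{r} a_1,a_2,a_3;\\ b_1,b_2;\end{array}z\right]_N=\sum_{n=0}^{N}\frac{(a_1)_n(a_2)_n(a_3)_n}{(b_1)_n(b_2)_n}\frac{z^n}{n!}$ (the sum of the first $N+1$ terms), defined whenever $(b_1)_n(b_2)_n\neq0$ for $0\le n\le N$. *)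

From HB Require Import structures.
From mathcomp Require Import all_boot all_order all_algebra.
From mathcomp Require Export complex.
From mathcomp Require Import reals.
Set Implicit Arguments. Unset Strict Implicit. Unset Printing Implicit Defensive.
Import Order.TTheory GRing.Theory Num.Theory.
Local Open Scope ring_scope.

Definition poch {F : fieldType} (a : F) (n : nat) : F :=
  \prod_(i < n) (a + i%:R).

Definition F32_trunc {F : fieldType} (a1 a2 a3 b1 b2 z : F) (N : nat) : F :=
  \sum_(n < N.+1)
    (poch a1 n * poch a2 n * poch a3 n) / (poch b1 n * poch b2 n)
      * (z ^+ n / (n`!)%:R).

(* For fixed b and c the terminating series
     S_m = 3F2(-2m, b, c; 2c, (1+b)/2 - m; 1)
   equals (1/2)_m (c + 1/2 - b/2)_m / (((1-b)/2)_m (c + 1/2)_m).  This is shown by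
   induction on m via creative telescoping: the summands t_m(n) satisfy
   t_{m+1}(n) - l_m t_m(n) = G_m(n+1) - G_m(n) for a hypergeometric G_m vanishing
   at n = 0 and n = 2m+3, hence S_{m+1} = l_m S_m, and l_m is also the ratio of
   consecutive values of the closed form.  The theorem is the case c = -m-k-1/2,
   where 2c = -2m-2k-1 and the reflection (1-a-m)_m = (-1)^m (a)_m brings the
   closed form to the stated shape. *)

From HB Require Import structures.
From mathcomp Require Import all_boot all_order all_algebra.
From mathcomp Require Import complex reals.
From mathcomp Require Import ring zify.
Set Implicit Arguments. Unset Strict Implicit. Unset Printing Implicit Defensive.
Import Order.TTheory GRing.Theory Num.Theory.
Local Open Scope ring_scope.

Section Pochhammer.
Variable F : fieldType.
Implicit Types a d : F.

Lemma poch0 a : poch a 0 = 1.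
Proof. by rewrite /poch big_ord0. Qed.

Lemma pochS a n : poch a n.+1 = poch a n * (a + n%:R).
Proof. by rewrite /poch big_ord_recr. Qed.

Lemma pochSl a n : poch a n.+1 = a * poch (a + 1) n.
Proof.
rewrite /poch big_ord_recl addr0; congr (_ * _); apply: eq_bigr => i _.
by rewrite lift0 -nat1r addrA.
Qed.

Lemma poch_oppn_eq0 (j n : nat) : (j < n)%N -> poch (- j%:R : F) n = 0.
Proof. by move=> ltjn; rewrite /poch (bigD1 (Ordinal ltjn)) //= addNr mul0r. Qed.

Lemma poch_rev a n : poch (- a - n%:R + 1) n = (-1) ^+ n * poch a n.
Proof.
elim: n a => [|n IHn] a; first by rewrite !poch0 mulr1.
have -> : - a - n.+1%:R + 1 = - (a + 1) - n%:R + 1 by rewrite -natr1; ring.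
rewrite pochS IHn pochSl exprS.
have -> : - (a + 1) - n%:R + 1 + n%:R = - a by ring.
ring.
Qed.

Lemma poch_rev_ratio a d n :
  poch (- a - n%:R + 1) n / poch (- d - n%:R + 1) n = poch a n / poch d n.
Proof. by rewrite !poch_rev invfM mulrACA mulfV ?signr_eq0 ?mul1r. Qed.

End Pochhammer.

Section Watson.
Variable F : numFieldType.
Variables b c : F.

Definition watson_lower (m : nat) : F := (1 + b) / 2%:R - m%:R.

Definition watson_sum (m : nat) : F :=
  F32_trunc (- (2 * m)%N%:R) b c (2%:R * c) (watson_lower m) 1 (2 * m).

Definition watson_term (m n : nat) : F :=
  poch (- (2 * m)%N%:R) n * poch b n * poch c n /
    (poch (2%:R * c) n * poch (watson_lower m) n) * (1 ^+ n / (n`!)%:R).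

Lemma watson_sumE m : watson_sum m = \sum_(n < (2 * m).+1) watson_term m n.
Proof. by []. Qed.

Lemma watson_term_eq0 m n : (2 * m < n)%N -> watson_term m n = 0.
Proof. by move=> lt_2m_n; rewrite /watson_term poch_oppn_eq0 // !mul0r. Qed.

Definition watson_value (m : nat) : F :=
  poch 2%:R^-1 m * poch (c + 2%:R^-1 - b / 2%:R) m /
    (poch ((1 - b) / 2%:R) m * poch (c + 2%:R^-1) m).

Definition watson_ratio (m : nat) : F :=
  (2%:R^-1 + m%:R) * (c + 2%:R^-1 - b / 2%:R + m%:R) /
    (((1 - b) / 2%:R + m%:R) * (c + 2%:R^-1 + m%:R)).

Lemma watson_valueS m : watson_value m.+1 = watson_ratio m * watson_value m.
Proof. by rewrite /watson_value /watson_ratio !pochS !invfM; ring. Qed.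

Lemma watson_lowerS m : watson_lower m.+1 = watson_lower m - 1.
Proof. by rewrite /watson_lower -(natr1 m) opprD addrA. Qed.

Definition watson_base (m n : nat) : F :=
  poch (- (2 * m.+1)%N%:R) n * poch b n * poch c n /
    (poch (2%:R * c) n * poch (watson_lower m) n * (n`!)%:R).

(* Zeilberger's certificate for the recurrence in m; [watson_base m] is the
   hypergeometric factor shared by [watson_term m] and [watson_term m.+1]. *)
Definition watson_cert (m n : nat) : F :=
  watson_base m n *
  (n%:R * (n%:R + 2%:R * c - 1) * (2%:R * n%:R + b - 2%:R * m%:R - 1) /
    ((2%:R * m%:R + 2%:R) * (2%:R * m%:R + 1 - b) * (2%:R * m%:R + 1 + 2%:R * c))).

Lemma watson_cert0 m : watson_cert m 0 = 0.
Proof. by rewrite /watson_cert !mul0r mulr0. Qed.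

Lemma watson_cert_end m : watson_cert m (2 * m.+1).+1 = 0.
Proof. by rewrite /watson_cert /watson_base poch_oppn_eq0 // !mul0r. Qed.

Lemma watson_baseS m n :
  watson_base m n.+1 = watson_base m n *
    ((- (2 * m.+1)%N%:R + n%:R) * (b + n%:R) * (c + n%:R) /
     ((2%:R * c + n%:R) * (watson_lower m + n%:R) * (n.+1)%:R)).
Proof. by rewrite /watson_base !pochS factS !natrM !invfM; ring. Qed.

Lemma watson_term_base m n (a := - (2 * m.+1)%N%:R : F) :
  watson_term m n = watson_base m n * ((a + n%:R) * (a + n%:R + 1) / (a * (a + 1))).
Proof.
have a_eq : a + 1 + 1 = - (2 * m)%N%:R by rewrite /a !natrM; ring.
have poch_a : poch (- (2 * m)%N%:R) n * (a * (a + 1))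
              = poch a n * (a + n%:R) * (a + n%:R + 1).
  have -> : poch a n * (a + n%:R) * (a + n%:R + 1) = poch a n.+2.
    by rewrite !pochS -(natr1 n) addrA.
  by rewrite pochSl pochSl a_eq mulrA mulrC.
have a_neq0 : a * (a + 1) != 0.
  have -> : a + 1 = - (2 * m).+1%:R by rewrite /a mulnS -(natr1 (2 * m).+1) opprD addrNK.
  by rewrite mulf_neq0 // oppr_eq0 pnatr_eq0.
rewrite /watson_term /watson_base expr1n -(mulfK a_neq0 (poch _ n)) poch_a.
by rewrite !invfM; ring.
Qed.

Lemma watson_termS_base m n (x := watson_lower m) :
  x - 1 + n%:R != 0 ->
  watson_term m.+1 n = watson_base m n * ((x - 1 + n%:R) / (x - 1)).
Proof.
move=> xn_neq0; have poch_x : poch (x - 1) n * (x - 1 + n%:R) = (x - 1) * poch x n.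
  by rewrite -pochS pochSl subrK.
rewrite /watson_term /watson_base watson_lowerS -/x expr1n.
rewrite -(mulfK xn_neq0 (poch (x - 1) n)) poch_x.
by rewrite !invfM invrK; ring.
Qed.

Lemma watson_telescope m n :
  (forall i : nat, watson_lower m.+1 + i%:R != 0) ->
  2%:R * c + n%:R != 0 -> (1 - b) / 2%:R + m%:R != 0 -> c + 2%:R^-1 + m%:R != 0 ->
  watson_term m.+1 n - watson_ratio m * watson_term m n
  = watson_cert m n.+1 - watson_cert m n.
Proof.
move=> hx h2c hb hc.
have double_neq0 (y z : F) : z != 0 -> y = 2%:R * z -> y != 0.
  by move=> z_neq0 ->; rewrite mulf_neq0 ?pnatr_eq0.
have hx' i : (1 + b) / 2%:R - m%:R - 1 + i%:R != 0.
  by have := hx i; rewrite /watson_lower -(natr1 m) opprD addrA.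
rewrite watson_termS_base; last by rewrite -watson_lowerS.
rewrite watson_term_base /watson_cert watson_baseS /watson_ratio /watson_lower.
rewrite -(natr1 n) mulnS natrD natrM.
field; rewrite h2c; repeat (apply/andP; split) => //.
- by apply: (double_neq0 _ _ hc); field.
- by apply: (double_neq0 _ _ hb); field.
- have -> : 2%:R * m%:R + 2%:R = (2 * m + 2)%N%:R :> F by rewrite natrD natrM.
  by rewrite pnatr_eq0 addn2.
- by rewrite natr1 pnatr_eq0.
- by apply: (double_neq0 _ _ (hx' n.+1)); rewrite -(natr1 n); field.
- have -> : - (2%:R + 2%:R * m%:R) + 1 = - (2 * m + 1)%N%:R :> F.
    by rewrite natrD natrM; ring.
  by rewrite oppr_eq0 pnatr_eq0 addn1.
- by apply: (double_neq0 _ _ (hx' 0)); field.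
Qed.

Lemma watson_sumS m :
  (forall i : nat, watson_lower m.+1 + i%:R != 0) ->
  (forall i : nat, (i <= 2 * m.+1)%N -> 2%:R * c + i%:R != 0) ->
  (1 - b) / 2%:R + m%:R != 0 -> c + 2%:R^-1 + m%:R != 0 ->
  watson_sum m.+1 = watson_ratio m * watson_sum m.
Proof.
move=> hx h2c hb hc.
have -> : watson_sum m = \sum_(0 <= n < (2 * m.+1).+1) watson_term m n.
  rewrite watson_sumE -(big_mkord xpredT).
  rewrite [RHS](big_cat_nat _ (n := (2 * m).+1)) //=; last lia.
  rewrite [X in _ = _ + X]big_nat_cond [X in _ = _ + X]big1 ?addr0 //.
  by move=> n /andP[/andP[/watson_term_eq0]].
rewrite watson_sumE -(big_mkord xpredT) mulr_sumr; apply/eqP; rewrite -subr_eq0 -sumrB.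
rewrite (eq_big_nat _ _ (F2 := fun n => watson_cert m n.+1 - watson_cert m n)).
  by rewrite telescope_sumr // watson_cert_end watson_cert0 subrr.
by move=> n /andP[_ lt_n_2m2]; apply: watson_telescope => //; apply: h2c.
Qed.

Lemma watson_sum_value m :
  (forall i : nat, watson_lower m + i%:R != 0) ->
  (forall i : nat, (i <= 2 * m)%N -> 2%:R * c + i%:R != 0) ->
  (forall i : nat, (i < m)%N -> (1 - b) / 2%:R + i%:R != 0) ->
  (forall i : nat, (i < m)%N -> c + 2%:R^-1 + i%:R != 0) ->
  watson_sum m = watson_value m.
Proof.
elim: m => [|m IHm] hx h2c hb hc.
  by rewrite watson_sumE big_ord1 /watson_term /watson_value !poch0 !mul1r !invr1 mulr1.
rewrite watson_sumS ?hb ?hc // watson_valueS IHm // => [i|i le_i2m|i ltim|i ltim].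
- by have := hx i.+1; rewrite watson_lowerS -(natr1 i) addrA addrAC subrK.
- by apply: h2c; rewrite (leq_trans le_i2m) // leq_mul2l leqnSn.
- exact/hb/ltnW.
- exact/hc/ltnW.
Qed.

End Watson.

Lemma F32_watson_half_int (F : numFieldType) (b : F) (m k : nat) :
  (forall j : nat, (1 + b) / 2%:R - m%:R != - j%:R) ->
  F32_trunc (- (2 * m)%N%:R) b (- (m + k)%N%:R - 2%:R^-1)
            (- (2 * m + 2 * k + 1)%N%:R) ((1 + b) / 2%:R - m%:R) 1 (2 * m)
  = poch 2%:R^-1 m * poch ((2%:R + b + (2 * k)%N%:R) / 2%:R) m
    / (poch ((1 - b) / 2%:R) m * poch (1 + k%:R) m).
Proof.
move=> hb; set c : F := - (m + k)%N%:R - 2%:R^-1.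
have two_c : - (2 * m + 2 * k + 1)%N%:R = 2%:R * c by rewrite /c !(natrD, natrM); field.
rewrite two_c -[F32_trunc _ _ _ _ _ _ _]/(watson_sum b c m) watson_sum_value.
- rewrite /watson_value.
  have -> : c + 2%:R^-1 - b / 2%:R = - ((2%:R + b + (2 * k)%N%:R) / 2%:R) - m%:R + 1.
    by rewrite /c !(natrD, natrM); field.
  have -> : c + 2%:R^-1 = - (1 + k%:R) - m%:R + 1 by rewrite /c !(natrD, natrM); field.
  by rewrite !invfM mulrACA [RHS]mulrACA poch_rev_ratio.
- by move=> i; rewrite /watson_lower addr_eq0.
- by move=> i le_i_2m; rewrite -two_c addrC subr_eq0 eqr_nat; lia.
- move=> i lt_i_m; have := hb (m - i.+1)%N; apply: contra => /eqP hi.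
  by rewrite natrB // -(natr1 i) -subr_eq0; apply/eqP; rewrite -[RHS]oppr0 -hi; field.
- move=> i lt_i_m; have -> : c + 2%:R^-1 + i%:R = i%:R - (m + k)%N%:R by rewrite /c; field.
  by rewrite subr_eq0 eqr_nat; lia.
Qed.

Local Open Scope complex_scope.

Theorem mainTheorem1 (R : realType) (m k : nat) (beta : R[i])
  (hm : (0 < m)%N) (hk : (0 < k)%N)
  (hbeta : forall j : nat, beta != - (j%:R))
  (hb2 : forall j : nat, (1 + beta) / 2%:R - m%:R != - (j%:R)) :
  F32_trunc (- (2 * m)%N%:R) beta (- (m + k)%N%:R - 2%:R^-1)
            (- (2 * m + 2 * k + 1)%N%:R) ((1 + beta) / 2%:R - m%:R) 1 (2 * m)
  = (poch (2%:R^-1) m * poch ((2%:R + beta + (2 * k)%N%:R) / 2%:R) m)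
    / (poch ((1 - beta) / 2%:R) m * poch (1 + k%:R) m).
Proof.
exact: F32_watson_half_int.
Qed.
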